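(* With the notation of the context, the joint distribution of $(\bar M,T,X,Z,R)$ satisfies $\widetilde p_{\bar M\,T\,X\,Z\,R}=\widetilde q_{\bar M\,T\,X\,Z\,R}$, where $$\widetilde q_{\bar M TXZR}(\bar m,t,x,z,\rho)\triangleq \widetilde p_{XZ|T}(x,z|t)\,2^{-n}\,|\mathcal{R}|^{-1}\,\mathds{1}\{\bar m=F(\rho,t)\},$$ i.e., under $\widetilde q$, $T$ is uniform on $\{0,1\}^n$, $R$ is uniform on $\mathcal{R}$ and independent of $T$, $(X,Z)$ is generated from $T$ by $\widetilde p_{XZ|T}$, and $\bar M=F(R,T)$.
   Context: Let $n\geq r$ be positive integers and identify $\{0,1\}^n$ with the finite field $\mathrm{GF}(2^n)$ (via a fixed basis); $\odot$ denotes field multiplication, $\|$ concatenation of bit strings. Let $\mathcal{R}=\{0,1\}^n\setminus\{\mathbf 0\}$. Let $\bar M$ be uniform on $\{0,1\}^r$, $R$ uniform on $\mathcal{R}$, $R'$ uniform on $\{0,1\}^{n-r}$, mutually independent, and define $T=R^{-1}\odot(\bar M\|R')$. Let $(X,Z)$ be random variables generated from $T$ through a conditional distribution $\widetilde p_{XZ|T}$ (in the paper, the one induced by the sub-block encoder and the eavesdropper's channel), conditionally independent of $(\bar M,R,R')$ given $T$; $\widetilde p$ denotes the resulting joint distribution. Define $F:\mathcal{R}\times\{0,1\}^n\to\{0,1\}^r$ by $F(\rho,t)=(\rho\odot t)|_{1:r}$, the leftmost $r$ bits of $\rho\odot t$. *)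

From HB Require Import structures.
From mathcomp Require Import all_boot all_order all_algebra all_field.
Set Implicit Arguments. Unset Strict Implicit. Unset Printing Implicit Defensive.
Import Order.TTheory GRing.Theory Num.Theory.
Local Open Scope ring_scope.

Notation bits k := 'rV['F_2]_k.

Definition nzbits (n : nat) := {v : bits n | v != 0}.

(* A fixed identification of {0,1}^n (n = r + k) with the finite field L:
   phi : bits n -> L with inverse psi, phi additive (F_2-linear: basis). *)
Definition field_ident (n : nat) (L : finFieldType)
  (phi : bits n -> L) (psi : L -> bits n) : Prop :=
  [/\ cancel phi psi, cancel psi phi & forall u v, phi (u + v) = phi u + phi v].

Definition bmul (n : nat) (L : finFieldType) (phi : bits n -> L) (psi : L -> bits n)
  (u v : bits n) : bits n := psi (phi u * phi v).
Definition binv (n : nat) (L : finFieldType) (phi : bits n -> L) (psi : L -> bits n)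
  (u : bits n) : bits n := psi ((phi u)^-1).

Definition Tmap (r k : nat) (L : finFieldType) (phi : bits (r + k) -> L)
  (psi : L -> bits (r + k)) (rho : nzbits (r + k)) (m : bits r) (r' : bits k)
  : bits (r + k) :=
  bmul phi psi (binv phi psi (val rho)) (row_mx m r').

Definition Fmap (r k : nat) (L : finFieldType) (phi : bits (r + k) -> L)
  (psi : L -> bits (r + k)) (rho : nzbits (r + k)) (t : bits (r + k)) : bits r :=
  lsubmx (bmul phi psi (val rho) t).

Definition cond_distr (R : numDomainType) (n : nat) (X Z : finType)
  (W : bits n -> X -> Z -> R) : Prop :=
  (forall t x z, 0 <= W t x z) /\ (forall t, \sum_(x : X) \sum_(z : Z) W t x z = 1).

(* The actual joint distribution p~ of (Mbar, T, X, Z, R): Mbar, R, R'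
   independent uniform, T = Tmap R Mbar R', (X,Z) ~ W(.|T) conditionally
   independent of (Mbar,R,R') given T; R' marginalized out. *)
Definition ptilde (R : numFieldType) (r k : nat) (L : finFieldType)
  (phi : bits (r + k) -> L) (psi : L -> bits (r + k)) (X Z : finType)
  (W : bits (r + k) -> X -> Z -> R)
  (m : bits r) (t : bits (r + k)) (x : X) (z : Z) (rho : nzbits (r + k)) : R :=
  \sum_(r' : bits k)
     (2 ^+ r)^-1 * (#|{: nzbits (r + k)}|%:R)^-1 * (2 ^+ k)^-1
     * (t == Tmap phi psi rho m r')%:R * W t x z.

Definition qtilde (R : numFieldType) (r k : nat) (L : finFieldType)
  (phi : bits (r + k) -> L) (psi : L -> bits (r + k)) (X Z : finType)
  (W : bits (r + k) -> X -> Z -> R)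
  (m : bits r) (t : bits (r + k)) (x : X) (z : Z) (rho : nzbits (r + k)) : R :=
  W t x z * (2 ^+ (r + k))^-1 * (#|{: nzbits (r + k)}|%:R)^-1
  * (m == Fmap phi psi rho t)%:R.

(* Multiplication by the unit rho is a bijection of GF(2^n), so T = rho^-1 (M || R')
   holds exactly when rho T = M || R'.  Summing over R', the only surviving term is
   R' = the right part of rho T, and it survives iff M = F(rho, T); the weights
   2^-r 2^-(n-r) then combine to 2^-n. *)

From HB Require Import structures.
From mathcomp Require Import all_boot all_order all_algebra all_field.
From mathcomp Require Import ring.
Set Implicit Arguments.
Unset Strict Implicit.
Unset Printing Implicit Defensive.

Import GRing.Theory.
Local Open Scope ring_scope.

Lemma eq_row_mxE (T : eqType) (m n1 n2 : nat) (A : 'M[T]_(m, n1 + n2))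
    (B1 : 'M_(m, n1)) (B2 : 'M_(m, n2)) :
  (A == row_mx B1 B2) = (lsubmx A == B1) && (rsubmx A == B2).
Proof.
rewrite -{1}(hsubmxK A).
by apply/eqP/andP => [/eq_row_mx [-> ->] | [/eqP -> /eqP ->]].
Qed.

Lemma sum_eq_row_mx (R : pzSemiRingType) (T : finType) (m n1 n2 : nat)
    (A : 'M[T]_(m, n1 + n2)) (B1 : 'M_(m, n1)) :
  \sum_(B2 : 'M[T]_(m, n2)) ((A == row_mx B1 B2)%:R : R) = (lsubmx A == B1)%:R.
Proof.
under eq_bigr => B2 _ do rewrite eq_row_mxE.
rewrite (bigD1 (rsubmx A)) //= eqxx andbT big1 ?addr0 // => B2 neqB2.
by rewrite (eq_sym (rsubmx A)) (negbTE neqB2) andbF.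
Qed.

Section TransportedField.

Variables (n : nat) (L : finFieldType) (phi : bits n -> L) (psi : L -> bits n).
Hypothesis phi_psi : field_ident phi psi.

Lemma field_ident_phi0 : phi 0 = 0.
Proof.
case: phi_psi => _ _ phiD.
by apply: (addrI (phi 0)); rewrite -phiD !addr0.
Qed.

Lemma field_ident_phi_eq0 (u : bits n) : (phi u == 0) = (u == 0).
Proof.
case: phi_psi => phiK _ _.
by rewrite -field_ident_phi0 (can_eq phiK).
Qed.

Lemma eq_bmul_binv (u t w : bits n) : u != 0 ->
  (t == bmul phi psi (binv phi psi u) w) = (bmul phi psi u t == w).
Proof.
case: phi_psi => phiK psiK _; rewrite -field_ident_phi_eq0 => nz_u.
rewrite /bmul /binv psiK.
apply/eqP/eqP => [-> | <-]; rewrite psiK mulrA.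
- by rewrite mulfV // mul1r phiK.
- by rewrite mulVf // mul1r phiK.
Qed.

End TransportedField.

Theorem lemma4 (R : numFieldType) (r k : nat) (L : finFieldType)
  (phi : 'rV['F_2]_(r + k) -> L) (psi : L -> 'rV['F_2]_(r + k))
  (X Z : finType) (W : 'rV['F_2]_(r + k) -> X -> Z -> R) :
  field_ident phi psi ->
  cond_distr W ->
  forall (m : 'rV['F_2]_r) (t : 'rV['F_2]_(r + k)) (x : X) (z : Z)
         (rho : nzbits (r + k)),
    ptilde phi psi W m t x z rho = qtilde phi psi W m t x z rho.
Proof.
(* The identity holds pointwise for any kernel W. *)
move=> phi_psi _ m t x z rho.
rewrite /ptilde /qtilde /Fmap.
under eq_bigr => r' _ do
  rewrite /Tmap (eq_bmul_binv phi_psi _ _ (valP rho)) mulrAC.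
rewrite -mulr_sumr sum_eq_row_mx eq_sym exprD invfM.
ring.
Qed.
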